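(* Let $f(\mathbf{x})=\mathbf{x}^{T}A\mathbf{x}+b^{T}\mathbf{x}+1$ with $A\in\mathbb{R}^{n\times n}$ symmetric and $b\in\mathbb{R}^n$, and let $Q/(1,1)=A-\frac14 bb^{T}$. Then: (i) $f$ has a monic Hermitian determinantal representation of size $2$, i.e. there exist Hermitian $A_1,\dots,A_n\in\mathbb{C}^{2\times 2}$ with $f(\mathbf{x})=\det(I_2+x_1A_1+\dots+x_nA_n)$ for all $\mathbf{x}$, if and only if $Q/(1,1)$ is negative semidefinite and $\operatorname{rank}(Q/(1,1))\le 3$; (ii) $f$ has a monic symmetric determinantal representation of size $2$ (i.e. as in (i) but with $A_j$ real symmetric) if and only if $Q/(1,1)$ is negative semidefinite and $\operatorname{rank}(Q/(1,1))\le 2$. In particular, if $Q/(1,1)$ is negative semidefinite of rank exactly $3$, then $f$ has a monic Hermitian determinantal representation of size $2$ but no monic symmetric determinantal representation of size $2$.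
   Context: $Q=\begin{bmatrix}1 & b^T/2\\ b/2 & A\end{bmatrix}$ is the matrix representation of $f$, i.e. $f(\mathbf{x})=Z^T Q Z$ with $Z=(1,x_1,\dots,x_n)^T$, and $Q/(1,1)$ denotes the Schur complement of its $(1,1)$ entry. *)

(* The ambient "complex numbers" are an arbitrary
   numClosedFieldType C (e.g. algC); "real" means x \is Num.real. *)
From HB Require Import structures.
From mathcomp Require Import all_boot all_order all_algebra.
Set Implicit Arguments. Unset Strict Implicit. Unset Printing Implicit Defensive.
Import Order.TTheory GRing.Theory Num.Theory.
Local Open Scope ring_scope.

Section Defs.
Variable C : numClosedFieldType.

Definition real_mx m n (M : 'M[C]_(m, n)) : Prop :=
  forall i j, M i j \is Num.real.

Definition quad_poly n (A : 'M[C]_n) (b : 'cV[C]_n) (x : 'cV[C]_n) : C :=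
  (x^T *m A *m x) 0 0 + (b^T *m x) 0 0 + 1.

Definition schur11 n (A : 'M[C]_n) (b : 'cV[C]_n) : 'M[C]_n :=
  A - 4%:R^-1 *: (b *m b^T).

Definition neg_semidef n (S : 'M[C]_n) : Prop :=
  forall v : 'cV[C]_n, real_mx v -> (v^T *m S *m v) 0 0 <= 0.

Definition hermitian m (M : 'M[C]_m) : Prop :=
  forall i j, M i j = (M j i)^*.

Definition real_symmetric m (M : 'M[C]_m) : Prop :=
  real_mx M /\ M^T = M.

Definition det_pencil2 n (Aj : 'I_n -> 'M[C]_2) (x : 'cV[C]_n) : C :=
  \det (1%:M + \sum_(i < n) x i 0 *: Aj i).

Definition has_herm_rep2 n (A : 'M[C]_n) (b : 'cV[C]_n) : Prop :=
  exists Aj : 'I_n -> 'M[C]_2, (forall i, hermitian (Aj i)) /\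
    forall x : 'cV[C]_n, real_mx x -> quad_poly A b x = det_pencil2 Aj x.

Definition has_sym_rep2 n (A : 'M[C]_n) (b : 'cV[C]_n) : Prop :=
  exists Aj : 'I_n -> 'M[C]_2, (forall i, real_symmetric (Aj i)) /\
    forall x : 'cV[C]_n, real_mx x -> quad_poly A b x = det_pencil2 Aj x.
End Defs.

(* Completing the square, f(x) = x^T S x + (1 + b.x/2)^2 with S = Q/(1,1).
   For a Hermitian pencil with diagonal vectors p, r and off-diagonal vector
   q = w1 + i w2, the determinant is
   (1 + (p+r).x/2)^2 - ((p-r).x/2)^2 - (w1.x)^2 - (w2.x)^2 on real x, so
   comparing f(x) and f(-x) shows that x^T S x is minus a sum of three squares
   of real linear forms, and of two when the pencil is real symmetric (w2 = 0).
   Conversely, symmetric Gaussian elimination writes a negative semidefinite S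
   of rank at most r as minus a sum of r real rank-one squares w w^T, and these
   w are the data of a pencil of the above shape. *)

From Pilot Require Import Defs.
From HB Require Import structures.
From mathcomp Require Import all_boot all_order all_algebra.
From mathcomp Require Import ring.
Set Implicit Arguments. Unset Strict Implicit. Unset Printing Implicit Defensive.
Import Order.TTheory GRing.Theory Num.Theory.
Local Open Scope ring_scope.

Lemma det_mx22 (R : comNzRingType) (M : 'M[R]_2) :
  \det M = M 0 0 * M 1 1 - M 0 1 * M 1 0.
Proof.
rewrite (expand_det_row _ 0) !big_ord_recl big_ord0 /cofactor !det_mx11 !mxE /=.
rewrite expr0 expr1 mul1r mulN1r addr0 mulrN.
by congr (_ * M _ _ - M _ _ * M _ _); apply/val_inj.
Qed.

Section RealMatrices.
Variable C : numClosedFieldType.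
Implicit Types (m p : nat).

Lemma real_mx0 m p : real_mx (0 : 'M[C]_(m, p)).
Proof. by move=> i j; rewrite mxE rpred0. Qed.

Lemma real_mxD m p (M N : 'M[C]_(m, p)) : real_mx M -> real_mx N -> real_mx (M + N).
Proof. by move=> HM HN i j; rewrite mxE rpredD. Qed.

Lemma real_mxN m p (M : 'M[C]_(m, p)) : real_mx M -> real_mx (- M).
Proof. by move=> HM i j; rewrite mxE rpredN. Qed.

Lemma real_mxB m p (M N : 'M[C]_(m, p)) : real_mx M -> real_mx N -> real_mx (M - N).
Proof. by move=> HM HN; apply/real_mxD/real_mxN. Qed.

Lemma real_mxZ m p a (M : 'M[C]_(m, p)) : a \is Num.real -> real_mx M -> real_mx (a *: M).
Proof. by move=> Ha HM i j; rewrite mxE rpredM. Qed.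

Lemma real_mxM m p q (M : 'M[C]_(m, p)) (N : 'M[C]_(p, q)) :
  real_mx M -> real_mx N -> real_mx (M *m N).
Proof. by move=> HM HN i j; rewrite mxE rpred_sum // => k _; rewrite rpredM. Qed.

Lemma real_trmx m p (M : 'M[C]_(m, p)) : real_mx M -> real_mx M^T.
Proof. by move=> HM i j; rewrite mxE. Qed.

Lemma real_delta_mx m p i j : real_mx (delta_mx i j : 'M[C]_(m, p)).
Proof. by move=> k l; rewrite mxE; case: (_ && _); rewrite ?rpred1 ?rpred0. Qed.

End RealMatrices.

Lemma sum_ord2 (V : nmodType) (F : 'I_2 -> V) : \sum_j F j = F 0 + F 1.
Proof. by rewrite !big_ord_recl big_ord0 addr0; congr (F _ + F _); apply/val_inj. Qed.

Lemma sum_ord3 (V : nmodType) (F : 'I_3 -> V) : \sum_j F j = F 0 + F 1 + F 2.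
Proof.
rewrite !big_ord_recl big_ord0 addr0 addrA.
by congr (F _ + F _ + F _); apply/val_inj.
Qed.

Section Forms.
Variables (C : numClosedFieldType) (n : nat).
Implicit Types (M N : 'M[C]_n) (u v w : 'cV[C]_n).

Definition bform M u v : C := (u^T *m M *m v) 0 0.
Definition dot w v : C := (w^T *m v) 0 0.

Lemma bformDl M u1 u2 v : bform M (u1 + u2) v = bform M u1 v + bform M u2 v.
Proof. by rewrite /bform linearD /= !mulmxDl mxE. Qed.

Lemma bformZl M a u v : bform M (a *: u) v = a * bform M u v.
Proof. by rewrite /bform linearZ /= -!scalemxAl mxE. Qed.

Lemma bformDr M u v1 v2 : bform M u (v1 + v2) = bform M u v1 + bform M u v2.
Proof. by rewrite /bform mulmxDr mxE. Qed.

Lemma bformZr M a u v : bform M u (a *: v) = a * bform M u v.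
Proof. by rewrite /bform -scalemxAr mxE. Qed.

Lemma bform_add M N u v : bform (M + N) u v = bform M u v + bform N u v.
Proof. by rewrite /bform mulmxDr mulmxDl mxE. Qed.

Lemma bform_opp M u v : bform (- M) u v = - bform M u v.
Proof. by rewrite /bform mulmxN mulNmx mxE. Qed.

Lemma bform_sub M N u v : bform (M - N) u v = bform M u v - bform N u v.
Proof. by rewrite bform_add bform_opp. Qed.

Lemma bform_scale M a u v : bform (a *: M) u v = a * bform M u v.
Proof. by rewrite /bform -scalemxAr -scalemxAl mxE. Qed.

Lemma bform_sum k (F : 'I_k -> 'M[C]_n) u v :
  bform (\sum_j F j) u v = \sum_j bform (F j) u v.
Proof. by rewrite /bform mulmx_sumr mulmx_suml summxE. Qed.

Lemma bform_sym M u v : M^T = M -> bform M u v = bform M v u.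
Proof.
move=> HM; rewrite /bform -[in RHS](trmxK (v^T *m M *m u)) [in RHS]mxE.
by rewrite !trmx_mul !trmxK HM mulmxA.
Qed.

Lemma bform_delta M i j : bform M (delta_mx i 0) (delta_mx j 0) = M i j.
Proof. by rewrite /bform trmx_delta -rowE -colE !mxE. Qed.

Lemma bform_outer w u v : bform (w *m w^T) u v = dot w u * dot w v.
Proof.
rewrite /bform /dot !mulmxA -mulmxA mxE big_ord1.
by rewrite -[u^T *m w]trmxK trmx_mul trmxK mxE.
Qed.

Lemma dotDl u1 u2 v : dot (u1 + u2) v = dot u1 v + dot u2 v.
Proof. by rewrite /dot linearD /= mulmxDl mxE. Qed.

Lemma dotNl u v : dot (- u) v = - dot u v.
Proof. by rewrite /dot linearN /= mulNmx mxE. Qed.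

Lemma dotZl a u v : dot (a *: u) v = a * dot u v.
Proof. by rewrite /dot linearZ /= -scalemxAl mxE. Qed.

Lemma dotZr a u v : dot u (a *: v) = a * dot u v.
Proof. by rewrite /dot -scalemxAr mxE. Qed.

Lemma dotE w v : dot w v = \sum_k w k 0 * v k 0.
Proof. by rewrite /dot mxE; apply: eq_bigr => k _; rewrite mxE. Qed.

Lemma real_bform M u v : real_mx M -> real_mx u -> real_mx v -> bform M u v \is Num.real.
Proof. by move=> HM Hu Hv; apply/real_mxM/Hv/real_mxM/HM/real_trmx. Qed.

Lemma real_dot w v : real_mx w -> real_mx v -> dot w v \is Num.real.
Proof. by move=> Hw Hv; apply/real_mxM/Hv/real_trmx. Qed.

Lemma sym_bform_eq0 M :
  M^T = M -> (forall v, real_mx v -> bform M v v = 0) -> M = 0.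
Proof.
move=> HMs H0; apply/matrixP => k l; rewrite mxE.
have Hkk : M k k = 0 by rewrite -bform_delta H0 //; apply: real_delta_mx.
have Hll : M l l = 0 by rewrite -bform_delta H0 //; apply: real_delta_mx.
have : bform M (delta_mx k 0 + delta_mx l 0) (delta_mx k 0 + delta_mx l 0) = 0.
  by apply: H0; apply: real_mxD; apply: real_delta_mx.
have Hlk : M l k = M k l by rewrite -[in LHS]HMs mxE.
rewrite !(bformDl, bformDr, bform_delta) Hkk Hll Hlk add0r addr0.
by move/eqP; rewrite -mulr2n mulrn_eq0 /= => /eqP.
Qed.

End Forms.

Section PsdDecomposition.
Variables (C : numClosedFieldType) (n : nat).
Implicit Types (M : 'M[C]_n) (v w : 'cV[C]_n).

Definition psd M := forall v, real_mx v -> 0 <= bform M v v.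

Lemma psd_diag_eq0 M i j :
  real_mx M -> M^T = M -> psd M -> M i i = 0 -> M i j = 0.
Proof.
move=> HMr HMs HMp Hii; have [//|Hij] := eqVneq (M i j) 0.
have Hji : M j i = M i j by rewrite -[in LHS]HMs mxE.
(* as M i i = 0, the form along t e_i + e_j is affine in t: 2 t M i j + M j j *)
pose t := - (M j j + 1) / (2%:R * M i j).
have Htr : t \is Num.real by rewrite !(rpredM, rpredN, rpredD, rpredV, rpred1, rpred_nat).
have Hv : real_mx (t *: delta_mx i 0 + delta_mx j 0 : 'cV[C]_n).
  by apply: real_mxD; [apply: real_mxZ|]; rewrite //; apply: real_delta_mx.
move: (HMp _ Hv).
rewrite !(bformDl, bformDr, bformZl, bformZr, bform_delta) Hii Hji.
have -> : t * (t * 0) + t * M i j + (t * M i j + M j j) = -1.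
  by rewrite /t; field.
by rewrite ler0N1.
Qed.

Definition pivot_vec M i : 'cV[C]_n := M *m ((sqrtC (M i i))^-1 *: delta_mx i 0).

Section Pivot.
Variables (M : 'M[C]_n) (i : 'I_n).
Hypotheses (HMr : real_mx M) (HMs : M^T = M) (HMp : psd M) (HMii : M i i != 0).

Let d := M i i.
Let s := sqrtC d.
Let e : 'cV[C]_n := delta_mx i 0.
Let w := pivot_vec M i.

Let d_gt0 : 0 < d.
Proof. by rewrite /d lt0r HMii -(bform_delta M i i) HMp //; apply: real_delta_mx. Qed.

Let s_neq0 : s != 0.
Proof. by rewrite sqrtC_eq0 HMii. Qed.

Let dot_pivot v : dot w v = s^-1 * bform M e v.
Proof. by rewrite -bformZl /dot /bform /w /pivot_vec trmx_mul HMs. Qed.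

Lemma real_pivot_vec : real_mx (pivot_vec M i).
Proof.
apply: real_mxM => //; apply: real_mxZ; last exact: real_delta_mx.
by rewrite rpredV gtr0_real // sqrtC_gt0.
Qed.

Lemma psd_sub_pivot : psd (M - pivot_vec M i *m (pivot_vec M i)^T).
Proof.
move=> v Hv; rewrite bform_sub bform_outer -/w !dot_pivot.
set c := bform M e v; set F := bform M v v.
have Hcr : c \is Num.real by apply: real_bform => //; apply: real_delta_mx.
(* the form evaluated at d v - c e equals d (d F - c^2) *)
have key : 0 <= d * (d * F - c ^+ 2).
  have Hu : real_mx (d *: v - c *: e).
    apply: real_mxB; apply: real_mxZ => //; first exact: gtr0_real.
    exact: real_delta_mx.
  move: (HMp Hu).
  rewrite -scaleNr !(bformDl, bformDr, bformZl, bformZr) (bform_sym _ _ HMs).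
  rewrite bform_delta -/d -/c -/F.
  by congr (0 <= _); ring.
have -> : F - s^-1 * c * (s^-1 * c) = d^-1 * (d * F - c ^+ 2).
  by rewrite -(sqrtCK d) -/s; field.
rewrite pmulr_rge0 // in key.
by rewrite mulr_ge0 // invr_ge0 ltW.
Qed.

Lemma rank_sub_pivot :
  (\rank (M - pivot_vec M i *m (pivot_vec M i)^T)%R < \rank M)%N.
Proof.
rewrite -/w.
have Hsub : (M - w *m w^T <= M)%MS.
  rewrite {2}/w /pivot_vec trmx_mul HMs mulmxA -{1}[M]mul1mx -mulmxBl.
  exact: submxMl.
rewrite ltnNge; apply/negP => Hle.
have /submxP [D HD] : (M <= M - w *m w^T)%MS.
  by rewrite -(mxrank_leqif_sup Hsub).2 eqn_leq Hle (mxrank_leqif_sup Hsub).1.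
(* M - w w^T kills e, while M e has i-th entry d <> 0 *)
have Hkill : (M - w *m w^T) *m e = 0.
  rewrite mulmxBl -mulmxA [w^T *m e]mx11_scalar mul_mx_scalar.
  rewrite [_ 0 0]dot_pivot bform_delta -/d /w /pivot_vec -scalemxAr scalerA.
  have -> : s^-1 * d / sqrtC (M i i) = 1.
    by rewrite -/d -/s -[in s^-1 * d](sqrtCK d) -/s; field.
  by rewrite scale1r subrr.
have : (M *m e) i 0 = 0 by rewrite HD -mulmxA Hkill mulmx0 mxE.
by rewrite -colE mxE; apply/eqP.
Qed.

End Pivot.

Lemma psd_sum_outer r M : real_mx M -> M^T = M -> psd M -> (\rank M <= r)%N ->
  exists w : 'I_r -> 'cV[C]_n, (forall j, real_mx (w j)) /\ M = \sum_j w j *m (w j)^T.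
Proof.
elim: r M => [|r IH] M HMr HMs HMp Hrk.
  exists (fun _ => 0); split=> [j|]; first exact: real_mx0.
  by rewrite big_ord0; apply/eqP; rewrite -mxrank_eq0 -leqn0.
have [i Hii | Hdiag] := pickP (fun i => M i i != 0); last first.
  exists (fun _ => 0); split=> [j|]; first exact: real_mx0.
  rewrite big1 => [|j _]; last by rewrite mul0mx.
  apply/matrixP => k l; rewrite mxE; apply: psd_diag_eq0 => //.
  by move: (Hdiag k) => /negbFE/eqP.
set w := pivot_vec M i.
have Hwr : real_mx w := real_pivot_vec HMr HMp Hii.
have HM'r : real_mx (M - w *m w^T) by apply/real_mxB/real_mxM/real_trmx.
have HM's : (M - w *m w^T)^T = M - w *m w^T.
  by rewrite linearB /= trmx_mul trmxK HMs.
have [w' [Hw' HM']] := IH _ HM'r HM's (psd_sub_pivot HMr HMs HMp Hii)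
  (leq_trans (rank_sub_pivot HMs Hii) Hrk).
exists (fun j => if unlift ord0 j is Some k then w' k else w); split.
  by move=> j; case: (unlift ord0 j).
rewrite big_ord_recl unlift_none.
under eq_bigr do rewrite liftK.
by rewrite -HM' addrC subrK.
Qed.

End PsdDecomposition.

Section NegSemidefinite.
Variables (C : numClosedFieldType) (n : nat).

Lemma rank_sum_outer r (w : 'I_r -> 'cV[C]_n) : (\rank (\sum_j w j *m (w j)^T)%R <= r)%N.
Proof.
elim: r w => [|r IH] w; first by rewrite big_ord0 mxrank0.
rewrite big_ord_recl; apply: leq_trans (mxrank_add _ _) _.
rewrite -[r.+1]/(1 + r)%N leq_add //.
exact: leq_trans (mxrankM_maxl _ _) (rank_leq_col _).
Qed.

Lemma neg_semidef_rank_leP r (S : 'M[C]_n) : real_mx S -> S^T = S ->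
  neg_semidef S /\ (\rank S <= r)%N <->
  exists w : 'I_r -> 'cV[C]_n, (forall j, real_mx (w j)) /\ S = - \sum_j w j *m (w j)^T.
Proof.
move=> HSr HSs; split=> [[HSn Hrk] | [w [Hw ->]]].
  have [w [Hw HS]] : exists w : 'I_r -> 'cV[C]_n,
      (forall j, real_mx (w j)) /\ - S = \sum_j w j *m (w j)^T.
    apply: psd_sum_outer; rewrite ?mxrank_opp ?linearN /= ?HSs //.
      exact: real_mxN.
    by move=> v Hv; rewrite bform_opp oppr_ge0; apply: HSn.
  by exists w; rewrite -HS opprK.
split; last by rewrite mxrank_opp rank_sum_outer.
move=> v Hv; rewrite -/(bform _ v v) bform_opp bform_sum oppr_le0.
by apply: sumr_ge0 => j _; rewrite bform_outer -expr2 real_exprn_even_ge0 // real_dot.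
Qed.

End NegSemidefinite.

Lemma elim_even_odd (F : numFieldType) (a c P R K : F) :
  a + c + 1 = (1 + P) * (1 + R) - K -> a - c + 1 = (1 - P) * (1 - R) - K ->
  a - 4%:R^-1 * c ^+ 2 = - ((2%:R^-1 * (P - R)) ^+ 2 + K).
Proof.
move=> Hodd Heven.
have Ha : a = ((a + c + 1) + (a - c + 1)) / 2%:R - 1 by field.
have Hc : c = ((a + c + 1) - (a - c + 1)) / 2%:R by field.
by rewrite Hodd Heven in Ha Hc; rewrite Ha Hc; field.
Qed.

Section DeterminantalRepresentations.
Variables (C : numClosedFieldType) (n : nat).
Implicit Types (A : 'M[C]_n) (b v w x : 'cV[C]_n) (Aj : 'I_n -> 'M[C]_2).

Lemma real_schur11 A b : real_mx A -> real_mx b -> real_mx (schur11 A b).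
Proof.
move=> HAr Hbr; apply: real_mxB => //; apply: real_mxZ; first by rewrite rpredV rpred_nat.
exact/real_mxM/real_trmx.
Qed.

Lemma schur11_sym A b : A^T = A -> (schur11 A b)^T = schur11 A b.
Proof. by move=> HAs; rewrite linearB linearZ /= trmx_mul trmxK HAs. Qed.

Lemma bform_schur11 A b v :
  bform (schur11 A b) v v = bform A v v - 4%:R^-1 * dot b v ^+ 2.
Proof. by rewrite bform_sub bform_scale bform_outer expr2. Qed.

Lemma quad_polyE A b x :
  quad_poly A b x = bform (schur11 A b) x x + (1 + dot b x / 2%:R) ^+ 2.
Proof.
by rewrite bform_schur11 /quad_poly -/(bform A x x) -/(dot b x); field.
Qed.

Lemma det_pencil2_herm Aj x : (forall i, Defs.hermitian (Aj i)) -> real_mx x ->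
  det_pencil2 Aj x = (1 + dot (\col_i Aj i 0 0) x) * (1 + dot (\col_i Aj i 1 1) x)
                     - `|dot (\col_i Aj i 0 1) x| ^+ 2.
Proof.
move=> HAj Hx; rewrite /det_pencil2 det_mx22 normCK !mxE !summxE !dotE rmorph_sum.
rewrite !add0r; congr ((1 + _) * (1 + _) - _ * _); apply: eq_bigr => i _.
- by rewrite !mxE mulrC.
- by rewrite !mxE mulrC.
- by rewrite !mxE mulrC.
by rewrite !mxE rmorphM /= (conj_Creal (Hx _ _)) HAj mulrC.
Qed.

Definition pencil_vecs Aj : 'I_3 -> 'cV[C]_n := fun j =>
  nth 0 [:: 2%:R^-1 *: (\col_i Aj i 0 0 - \col_i Aj i 1 1);
            \col_i 'Re (Aj i 0 1); \col_i 'Im (Aj i 0 1)] j.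

Lemma real_pencil_vecs Aj j : (forall i, Defs.hermitian (Aj i)) -> real_mx (pencil_vecs Aj j).
Proof.
move=> HAj; have Hdiag i k : Aj i k k \is Num.real by apply/CrealP; rewrite -HAj.
case: j => [[|[|[|j]]] Hj] //= k l; rewrite !mxE //.
by rewrite rpredM ?rpredV ?rpred_nat ?rpredB.
Qed.

Lemma bform_schur11_herm_rep A b Aj : (forall i, Defs.hermitian (Aj i)) ->
    (forall x, real_mx x -> quad_poly A b x = det_pencil2 Aj x) ->
  forall v, real_mx v ->
  bform (schur11 A b) v v = - \sum_j dot (pencil_vecs Aj j) v ^+ 2.
Proof.
move=> HAj Hrep v Hv.
pose P := dot (\col_i Aj i 0 0) v; pose R := dot (\col_i Aj i 1 1) v.
pose K := `|dot (\col_i Aj i 0 1) v| ^+ 2.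
have HK : K = dot (pencil_vecs Aj 1) v ^+ 2 + dot (pencil_vecs Aj 2) v ^+ 2.
  rewrite /K; have -> : \col_i Aj i 0 1 = pencil_vecs Aj 1 + 'i *: pencil_vecs Aj 2.
    by apply/matrixP => k l; rewrite !mxE -Crect.
  by rewrite dotDl dotZl normC2_rect // real_dot //; apply: real_pencil_vecs.
have Hv' : real_mx ((-1) *: v) by apply: real_mxZ; rewrite ?rpredN ?rpred1.
have Hodd : bform A v v + dot b v + 1 = (1 + P) * (1 + R) - K.
  exact: (etrans (Hrep v Hv) (det_pencil2_herm HAj Hv)).
have Heven : bform A v v - dot b v + 1 = (1 - P) * (1 - R) - K.
  have := etrans (Hrep _ Hv') (det_pencil2_herm HAj Hv').
  rewrite /quad_poly -/(bform A _ _) -/(dot b _) bformZl bformZr !dotZr.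
  by rewrite !mulN1r opprK normrN.
rewrite bform_schur11 (elim_even_odd Hodd Heven) sum_ord3 HK.
have -> : dot (pencil_vecs Aj 0) v = 2%:R^-1 * (P - R) by rewrite /= dotZl dotDl dotNl.
by rewrite !addrA.
Qed.

Lemma schur11_herm_rep A b Aj : A^T = A -> (forall i, Defs.hermitian (Aj i)) ->
    (forall x, real_mx x -> quad_poly A b x = det_pencil2 Aj x) ->
  schur11 A b = - \sum_j pencil_vecs Aj j *m (pencil_vecs Aj j)^T.
Proof.
move=> HAs HAj Hrep; apply/eqP; rewrite -subr_eq0 opprK; apply/eqP.
apply: sym_bform_eq0 => [|v Hv].
  rewrite linearD linear_sum /= schur11_sym //; congr (_ + _).
  by apply: eq_bigr => j _; rewrite trmx_mul trmxK.
rewrite bform_add bform_sum (bform_schur11_herm_rep HAj Hrep) // addrC -sumrB.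
by rewrite big1 // => j _; rewrite bform_outer expr2 subrr.
Qed.

Definition herm_mx2 (a d z : C) : 'M[C]_2 :=
  \matrix_(k, l) if k == 0 then (if l == 0 then a else z) else (if l == 0 then z^* else d).

Lemma herm_mx2_hermitian a d z :
  a \is Num.real -> d \is Num.real -> Defs.hermitian (herm_mx2 a d z).
Proof.
move=> Har Hdr k l; rewrite !mxE.
by case: k => [[|[|k]] Hk] //; case: l => [[|[|l]] Hl] //=; rewrite ?conjCK ?conj_Creal.
Qed.

Lemma herm_mx2_real_symmetric a d z :
  a \is Num.real -> d \is Num.real -> z \is Num.real -> real_symmetric (herm_mx2 a d z).
Proof.
move=> Har Hdr Hzr; split=> [k l|]; last apply/matrixP => k l; rewrite !mxE;
  by case: k => [[|[|k]] Hk] //; case: l => [[|[|l]] Hl] //=; rewrite conj_Creal.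
Qed.

Definition rep_pencil b w0 w1 w2 : 'I_n -> 'M[C]_2 := fun i =>
  herm_mx2 (b i 0 / 2%:R + w0 i 0) (b i 0 / 2%:R - w0 i 0) (w1 i 0 + 'i * w2 i 0).

Section RepPencil.
Variables (b w0 w1 w2 : 'cV[C]_n).
Hypotheses (Hbr : real_mx b) (Hw0 : real_mx w0) (Hw1 : real_mx w1) (Hw2 : real_mx w2).

Lemma rep_pencil_hermitian i : Defs.hermitian (rep_pencil b w0 w1 w2 i).
Proof.
by apply: herm_mx2_hermitian;
  rewrite ?(rpredD, rpredB, rpredN, rpredM, rpredV, rpred1, rpred_nat, Hbr, Hw0).
Qed.

Lemma det_pencil2_rep_pencil A x :
    schur11 A b = - (w0 *m w0^T + w1 *m w1^T + w2 *m w2^T) -> real_mx x ->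
  quad_poly A b x = det_pencil2 (rep_pencil b w0 w1 w2) x.
Proof.
move=> HS Hx.
rewrite det_pencil2_herm //; last exact: rep_pencil_hermitian.
have -> : \col_i rep_pencil b w0 w1 w2 i 0 0 = 2%:R^-1 *: b + w0.
  by apply/matrixP => k l; rewrite !mxE ord1 mulrC.
have -> : \col_i rep_pencil b w0 w1 w2 i 1 1 = 2%:R^-1 *: b - w0.
  by apply/matrixP => k l; rewrite !mxE ord1 mulrC.
have -> : \col_i rep_pencil b w0 w1 w2 i 0 1 = w1 + 'i *: w2.
  by apply/matrixP => k l; rewrite !mxE ord1.
rewrite quad_polyE HS bform_opp !bform_add !bform_outer.
by rewrite !dotDl dotNl !dotZl normC2_rect ?real_dot //; field.
Qed.

End RepPencil.

Lemma rep_pencil_real_symmetric b w0 w1 i : real_mx b -> real_mx w0 -> real_mx w1 ->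
  real_symmetric (rep_pencil b w0 w1 0 i).
Proof.
move=> Hbr Hw0 Hw1; rewrite /rep_pencil mxE mulr0 addr0.
by apply: herm_mx2_real_symmetric;
  rewrite ?(rpredD, rpredB, rpredN, rpredM, rpredV, rpred1, rpred_nat, Hbr, Hw0, Hw1).
Qed.

End DeterminantalRepresentations.

Section RepresentationCriteria.
Variables (C : numClosedFieldType) (n : nat) (A : 'M[C]_n) (b : 'cV[C]_n).
Hypotheses (HAs : A^T = A) (Hbr : real_mx b).

Lemma herm_rep2P : has_herm_rep2 A b <->
  exists w : 'I_3 -> 'cV[C]_n, (forall j, real_mx (w j)) /\
    schur11 A b = - \sum_j w j *m (w j)^T.
Proof.
split=> [[Aj [HAj Hrep]] | [w [Hw HS]]].
  exists (pencil_vecs Aj); split=> [j|]; first exact: real_pencil_vecs.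
  exact: schur11_herm_rep.
rewrite sum_ord3 in HS.
exists (rep_pencil b (w 0) (w 1) (w 2)); split=> [i|x Hx].
  exact: rep_pencil_hermitian.
exact: det_pencil2_rep_pencil.
Qed.

Lemma sym_rep2P : has_sym_rep2 A b <->
  exists w : 'I_2 -> 'cV[C]_n, (forall j, real_mx (w j)) /\
    schur11 A b = - \sum_j w j *m (w j)^T.
Proof.
split=> [[Aj [HAj Hrep]] | [w [Hw HS]]].
  have HAjh i : Defs.hermitian (Aj i).
    by move=> k l; have [HAjr HAjs] := HAj i; rewrite conj_Creal // -{1}HAjs mxE.
  have Hw2 : pencil_vecs Aj 2 = 0.
    by apply/matrixP => k l; rewrite !mxE; apply/Creal_ImP; apply: (HAj k).1.
  exists (fun j => pencil_vecs Aj (widen_ord (leqnSn 2) j)); split=> [j|].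
    exact: real_pencil_vecs.
  by rewrite sum_ord2 (schur11_herm_rep HAs HAjh Hrep) sum_ord3 Hw2 mul0mx addr0.
have HS3 : schur11 A b = - (w 0 *m (w 0)^T + w 1 *m (w 1)^T + (0 : 'cV_n) *m 0^T).
  by rewrite mul0mx addr0 HS sum_ord2.
exists (rep_pencil b (w 0) (w 1) 0); split=> [i|x Hx].
  exact: rep_pencil_real_symmetric.
by apply: det_pencil2_rep_pencil => //; apply: real_mx0.
Qed.

End RepresentationCriteria.

Theorem mainTheorem2 (C : numClosedFieldType) (n : nat)
    (A : 'M[C]_n) (b : 'cV[C]_n)
    (hAr : real_mx A) (hAs : A^T = A) (hbr : real_mx b) :
  (has_herm_rep2 A b <->
     neg_semidef (schur11 A b) /\ (\rank (schur11 A b) <= 3)%N) /\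
  (has_sym_rep2 A b <->
     neg_semidef (schur11 A b) /\ (\rank (schur11 A b) <= 2)%N) /\
  (neg_semidef (schur11 A b) -> \rank (schur11 A b) = 3%N ->
     has_herm_rep2 A b /\ ~ has_sym_rep2 A b).
Proof.
have HSr := real_schur11 hAr hbr.
have HSs := schur11_sym b hAs.
have herm_iff := iff_trans (herm_rep2P hAs hbr) (iff_sym (neg_semidef_rank_leP 3 HSr HSs)).
have sym_iff := iff_trans (sym_rep2P hAs hbr) (iff_sym (neg_semidef_rank_leP 2 HSr HSs)).
split=> //; split=> // HSn Hrk.
split; first by apply/herm_iff; rewrite Hrk.
by move/sym_iff => [_]; rewrite Hrk.
Qed.
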